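(* Let $x,y$ be allocation rules of $n$-agent rank-based auctions, with bids from the all-pay auction with rule $x$. If $\delta_N\le 1/n$, then $$\int_{[0,\delta_N]\cup[1-\delta_N,1]} Z_y(q)\,b'(q)\,dq\le e\,\delta_N\,y'(\delta_N)+e\,\delta_N^2\,y'(1-\delta_N).$$
   Context: Agents have values i.i.d. from a continuous distribution $F$ on $[0,1]$; quantile $q=F(v)$, $v(q)=F^{-1}(q)$. For $k\in\{1,\dots,n-1\}$ the $k$-highest-bids-win allocation rule is $x_k(q)=\sum_{i=0}^{k-1}\binom{n-1}{i}q^{n-1-i}(1-q)^i$; $x_0\equiv0$, $x_n\equiv1$. A rank-based auction with position weights $1\ge w_1\ge\cdots\ge w_n\ge 0$ ($w_{n+1}:=0$) has allocation rule $\sum_{k=1}^{n}(w_k-w_{k+1})x_k(q)$. In the all-pay auction with rule $x$, the Bayes–Nash equilibrium bid function satisfies $b(0)=0$, $b'(q)=v(q)x'(q)$. $Z_y(q)=(1-q)\,y'(q)/x'(q)$. $\delta_N=\max(25\log\log N,n)/N$ for a sample size $N$. *)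

From Stdlib Require Import Reals Lra Lia.
Open Scope R_scope.

Fixpoint sumR (f : nat -> R) (m : nat) : R :=
  match m with
  | O => 0
  | S m' => sumR f m' + f m'
  end.

(* k-highest-bids-win allocation rule:
   x_k(q) = sum_{i=0}^{k-1} C(n-1,i) q^(n-1-i) (1-q)^i.
   For k = 0 this is the empty sum 0 = x_0, and for k = n it is
   (q + (1-q))^(n-1) = 1 = x_n, matching the paper's conventions. *)
Definition xk (n k : nat) (q : R) : R :=
  sumR (fun i => C (n - 1) i * q ^ (n - 1 - i) * (1 - q) ^ i) k.

Definition wext (n : nat) (w : nat -> R) (k : nat) : R :=
  if (k <=? n)%nat then w k else 0.

Definition rank_alloc (n : nat) (w : nat -> R) (q : R) : R :=
  sumR (fun j => (wext n w (S j) - wext n w (S (S j))) * xk n (S j) q) n.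

Definition valid_weights (n : nat) (w : nat -> R) : Prop :=
  w 1%nat <= 1 /\ (forall k, (1 <= k < n)%nat -> w (S k) <= w k) /\ 0 <= w n.

Definition deltaN (n N : nat) : R :=
  Rmax (25 * ln (ln (INR N))) (INR n) / INR N.

Definition is_quantile_fn (F v : R -> R) : Prop :=
  forall q, 0 <= q <= 1 ->
    0 <= v q <= 1 /\ F (v q) >= q /\
    (forall t, 0 <= t <= 1 -> F t >= q -> v q <= t).

Definition is_cont_cdf01 (F : R -> R) : Prop :=
  continuity F /\ (forall s t, s <= t -> F s <= F t) /\
  (forall t, t <= 0 -> F t = 0) /\ (forall t, 1 <= t -> F t = 1).

Definition Zy (yp xp : R -> R) (q : R) : R := (1 - q) * yp q / xp q.

(* all-pay BNE bid derivative b'(q) = v(q) x'(q) *)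
Definition bid_deriv (v xp : R -> R) (q : R) : R := v q * xp q.

Definition integrand (v xp yp : R -> R) (q : R) : R :=
  Zy yp xp q * bid_deriv v xp q.

(* The derivative of a rank-based allocation rule is a nonnegative combination
   of the Bernstein polynomials C(n-2,j) q^(n-2-j) (1-q)^j.  When (n-1) d <= 1,
   each of them is at most e times its value at d on [0, d], because
   (1 - d)^j >= (1 - 1/(j+1))^j >= 1/e, and symmetrically at most e times its
   value at 1 - d on [1 - d, 1].  The integrand Z_y b' equals (1-q) y'(q) v(q)
   <= (1-q) y'(q), so integrating these constant bounds over intervals of
   length at most d gives the claim; near 1 the extra factor d comes from
   1 - q <= d. *)

From Stdlib Require Import Reals Lra Lia.
From Coquelicot Require Import Coquelicot.
Open Scope R_scope.

Lemma C_ge0 (p j : nat) : 0 <= Binomial.C p j.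
Proof.
  unfold Binomial.C. apply Rmult_le_pos; [apply pos_INR |].
  left; apply Rinv_0_lt_compat, Rmult_lt_0_compat; apply INR_fact_lt_0.
Qed.

Lemma C_succ_mul_compl (a p : nat) : (a <= p)%nat ->
  Binomial.C (S p) a * INR (S p - a) = INR (S p) * Binomial.C p a.
Proof.
  intros Hap. unfold Binomial.C.
  replace (S p - a)%nat with (S (p - a)) by lia.
  rewrite !fact_simpl, !mult_INR.
  assert (INR (S (p - a)) <> 0) by (apply not_0_INR; lia).
  pose proof (INR_fact_neq_0 a). pose proof (INR_fact_neq_0 (p - a)).
  pose proof (INR_fact_neq_0 p).
  field; auto.
Qed.

Lemma C_succ_mul_succ (a p : nat) : (a <= p)%nat ->
  Binomial.C (S p) (S a) * INR (S a) = INR (S p) * Binomial.C p a.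
Proof.
  intros Hap. unfold Binomial.C. simpl (S p - S a)%nat.
  rewrite !fact_simpl, !mult_INR.
  assert (INR (S a) <> 0) by (apply not_0_INR; lia).
  pose proof (INR_fact_neq_0 a). pose proof (INR_fact_neq_0 (p - a)).
  pose proof (INR_fact_neq_0 p).
  field; auto.
Qed.

Definition bernstein (p j : nat) (q : R) : R :=
  Binomial.C p j * q ^ (p - j) * (1 - q) ^ j.

(* [bernstein_pad p k] is [bernstein p (k - 1)] padded with 0 at [k = 0] and
   [k > p + 1], so that the derivatives of the summands of [xk] telescope. *)
Definition bernstein_pad (p k : nat) (q : R) : R :=
  match k with
  | O => 0
  | S j => if (j <=? p)%nat then bernstein p j q else 0
  end.

Lemma is_derive_bernstein_term (m k : nat) (q : R) : (k <= m)%nat ->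
  is_derive (fun t => Binomial.C m k * t ^ (m - k) * (1 - t) ^ k) q
    (INR m * (bernstein_pad (m - 1) (S k) q - bernstein_pad (m - 1) k q)).
Proof.
  intros Hkm.
  assert (Hraw : is_derive (fun t => Binomial.C m k * t ^ (m - k) * (1 - t) ^ k) q
    (Binomial.C m k * INR (m - k) * q ^ pred (m - k) * (1 - q) ^ k
     - Binomial.C m k * INR k * q ^ (m - k) * (1 - q) ^ pred k)).
  { auto_derive; [exact I |]. unfold Rminus. ring. }
  destruct m as [| p].
  - replace k with 0%nat by lia.
    change (INR 0) with 0. rewrite Rmult_0_l.
    apply (is_derive_ext (fun _ => Binomial.C 0 0 * 1 * 1)); [reflexivity |].
    apply is_derive_Reals, derivable_pt_lim_const.
  - replace (S p - 1)%nat with p by lia.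
    replace (INR (S p) * _) with
      (Binomial.C (S p) k * INR (S p - k) * q ^ pred (S p - k) * (1 - q) ^ k
       - Binomial.C (S p) k * INR k * q ^ (S p - k) * (1 - q) ^ pred k); [exact Hraw |].
    unfold bernstein_pad, bernstein.
    destruct k as [| a].
    + rewrite (proj2 (Nat.leb_le 0 p)) by lia.
      rewrite !C_n_0, !Nat.sub_0_r. simpl. ring.
    + rewrite (proj2 (Nat.leb_le a p)) by lia. simpl pred.
      destruct (Nat.leb_spec (S a) p) as [Hap | Hap].
      * assert (E1 : Binomial.C (S p) (S a) * INR (S (p - S a))
                     = INR (S p) * Binomial.C p (S a)).
        { rewrite <- C_succ_mul_compl by lia. do 3 f_equal. lia. }
        pose proof (C_succ_mul_succ a p ltac:(lia)) as E2.
        replace (S p - S a)%nat with (S (p - S a)) by lia.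
        replace (p - a)%nat with (S (p - S a)) by lia. simpl pred.
        transitivity (Binomial.C (S p) (S a) * INR (S (p - S a)) * (q ^ (p - S a) * (1 - q) ^ S a)
          - Binomial.C (S p) (S a) * INR (S a) * (q ^ S (p - S a) * (1 - q) ^ a)); [ring |].
        rewrite E1, E2. ring.
      * replace a with p by lia. rewrite Nat.sub_diag, C_n_n, C_n_n.
        replace (S p - S p)%nat with 0%nat by lia. rewrite Nat.sub_diag. simpl pred.
        change (INR 0) with 0. ring.
Qed.

Lemma is_derive_xk (n k : nat) (q : R) : (k <= n)%nat ->
  is_derive (xk n k) q (INR (n - 1) * bernstein_pad (n - 2) k q).
Proof.
  replace (n - 2)%nat with (n - 1 - 1)%nat by lia.
  induction k as [| k IH]; intros Hkn.
  - apply (is_derive_ext (fun _ => 0)); [reflexivity |].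
    replace (INR (n - 1) * bernstein_pad _ 0 q) with 0 by (simpl; ring).
    apply is_derive_Reals, derivable_pt_lim_const.
  - apply (is_derive_ext
      (fun t => xk n k t + Binomial.C (n - 1) k * t ^ (n - 1 - k) * (1 - t) ^ k));
      [reflexivity |].
    replace (INR (n - 1) * bernstein_pad (n - 1 - 1) (S k) q) with
      (INR (n - 1) * bernstein_pad (n - 1 - 1) k q
       + INR (n - 1) * (bernstein_pad (n - 1 - 1) (S k) q - bernstein_pad (n - 1 - 1) k q))
      by ring.
    apply (is_derive_plus (xk n k)); [apply IH; lia |].
    apply is_derive_bernstein_term; lia.
Qed.

Lemma is_derive_sumR (f : nat -> R -> R) (df : nat -> R) (q : R) (m : nat) :
  (forall j, (j < m)%nat -> is_derive (f j) q (df j)) ->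
  is_derive (fun t => sumR (fun j => f j t) m) q (sumR df m).
Proof.
  induction m as [| m IH]; intros Hf; simpl.
  - apply is_derive_Reals, derivable_pt_lim_const.
  - apply (is_derive_plus (fun t => sumR (fun j => f j t) m) (f m)).
    + apply IH; intros; apply Hf; lia.
    + apply Hf; lia.
Qed.

Definition weight_gap (n : nat) (w : nat -> R) (j : nat) : R :=
  wext n w (S j) - wext n w (S (S j)).

Definition rank_alloc_deriv (n : nat) (w : nat -> R) (q : R) : R :=
  sumR (fun j => weight_gap n w j * (INR (n - 1) * bernstein_pad (n - 2) (S j) q)) n.

Lemma is_derive_rank_alloc (n : nat) (w : nat -> R) (q : R) :
  is_derive (rank_alloc n w) q (rank_alloc_deriv n w q).
Proof.
  apply (is_derive_sumR (fun j t => weight_gap n w j * xk n (S j) t)).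
  intros j Hj. apply is_derive_scal, is_derive_xk. lia.
Qed.

Lemma sumR_le (f g : nat -> R) (m : nat) :
  (forall j, (j < m)%nat -> f j <= g j) -> sumR f m <= sumR g m.
Proof.
  induction m as [| m IH]; intros Hfg; simpl; [lra |].
  pose proof (Hfg m ltac:(lia)).
  assert (sumR f m <= sumR g m) by (apply IH; intros; apply Hfg; lia).
  lra.
Qed.

Lemma sumR_mull (a : R) (g : nat -> R) (m : nat) :
  sumR (fun j => a * g j) m = a * sumR g m.
Proof. induction m as [| m IH]; simpl; [| rewrite IH]; ring. Qed.

Lemma sumR_ge0 (f : nat -> R) (m : nat) :
  (forall j, (j < m)%nat -> 0 <= f j) -> 0 <= sumR f m.
Proof.
  intros Hf. replace 0 with (sumR (fun _ => 0) m).
  - apply sumR_le; exact Hf.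
  - induction m as [| m IH]; simpl; [| rewrite IH]; try ring; intros; apply Hf; lia.
Qed.

Lemma weight_gap_ge0 (n : nat) (w : nat -> R) (j : nat) :
  valid_weights n w -> (j < n)%nat -> 0 <= weight_gap n w j.
Proof.
  intros (_ & Hdec & Hwn) Hj. unfold weight_gap, wext.
  rewrite (proj2 (Nat.leb_le (S j) n)) by lia.
  destruct (Nat.leb_spec (S (S j)) n).
  - pose proof (Hdec (S j) ltac:(lia)). lra.
  - replace (S j) with n by lia. lra.
Qed.

Lemma exp_le_exp_of_le (a b : R) : a <= b -> exp a <= exp b.
Proof. intros [Hab | ->]; [left; apply exp_increasing |]; lra. Qed.

Lemma exp_pow (a : R) (k : nat) : exp a ^ k = exp (INR k * a).
Proof.
  induction k as [| k IH]; simpl pow.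
  - simpl. rewrite Rmult_0_l, exp_0. ring.
  - rewrite IH, S_INR, <- exp_plus. f_equal. ring.
Qed.

(* (1 - 1/(j+1))^j >= 1/e, via 1/(1 - d) = 1 + d/(1 - d) <= exp (d/(1 - d)). *)
Lemma one_le_exp1_mul_pow_compl (d : R) (j : nat) :
  0 <= d -> INR (S j) * d <= 1 -> 1 <= exp 1 * (1 - d) ^ j.
Proof.
  intros Hd0 Hjd. destruct j as [| j].
  { simpl. pose proof (exp_ineq1_le 1). lra. }
  pose proof (pos_INR (S j)) as Hj.
  assert (Hd1 : d < 1) by (pose proof (pos_INR j); rewrite !S_INR in Hjd; nra).
  rewrite S_INR in Hjd.
  set (a := d / (1 - d)).
  assert (Hone : 1 <= exp a * (1 - d)).
  { pose proof (exp_ineq1_le a) as Hexp.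
    assert ((1 + a) * (1 - d) = 1) by (unfold a; field; lra). nra. }
  assert (Hja : INR (S j) * a <= 1).
  { unfold a. apply (Rmult_le_reg_r (1 - d)); [lra |].
    field_simplify; lra. }
  pose proof (pow_R1_Rle _ (S j) Hone) as Hpow.
  rewrite Rpow_mult_distr, exp_pow in Hpow.
  pose proof (exp_le_exp_of_le _ _ Hja).
  assert (0 <= (1 - d) ^ S j) by (apply pow_le; lra).
  nra.
Qed.

Lemma bernstein_ge0 (p j : nat) (q : R) : 0 <= q <= 1 -> 0 <= bernstein p j q.
Proof.
  intros Hq. unfold bernstein.
  apply Rmult_le_pos; [apply Rmult_le_pos |]; [apply C_ge0 | apply pow_le | apply pow_le]; lra.
Qed.

Lemma bernstein_pad_ge0 (p k : nat) (q : R) : 0 <= q <= 1 -> 0 <= bernstein_pad p k q.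
Proof.
  intros Hq. destruct k as [| j]; simpl; [lra |].
  destruct (j <=? p)%nat; [apply bernstein_ge0; exact Hq | lra].
Qed.

Lemma pow_le1 (x : R) (k : nat) : 0 <= x <= 1 -> x ^ k <= 1.
Proof. intros Hx. rewrite <- (pow1 k). apply pow_incr. lra. Qed.

(* On [0, d] the factor q^(p-j) grows and (1-q)^j drops by at most a factor e. *)
Lemma bernstein_le_near0 (p j : nat) (q d : R) : (j <= p)%nat ->
  0 <= q <= d -> INR (S p) * d <= 1 -> bernstein p j q <= exp 1 * bernstein p j d.
Proof.
  intros Hjp Hq Hpd. unfold bernstein.
  assert (Hd1 : d <= 1).
  { assert (1 <= INR (S p)) by (rewrite S_INR; pose proof (pos_INR p); lra). nra. }
  pose proof (C_ge0 p j).
  assert (Hpow : q ^ (p - j) <= d ^ (p - j)) by (apply pow_incr; lra).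
  assert (Hcompl : (1 - q) ^ j <= 1) by (apply pow_le1; lra).
  assert (Hexp : 1 <= exp 1 * (1 - d) ^ j).
  { apply one_le_exp1_mul_pow_compl; [lra |].
    assert (INR (S j) <= INR (S p)) by (apply le_INR; lia). nra. }
  assert (0 <= q ^ (p - j)) by (apply pow_le; lra).
  assert (0 <= (1 - q) ^ j) by (apply pow_le; lra).
  assert (0 <= Binomial.C p j * d ^ (p - j)) by (apply Rmult_le_pos; [lra | apply pow_le; lra]).
  apply Rle_trans with (Binomial.C p j * d ^ (p - j) * 1); [| nra].
  apply Rle_trans with (Binomial.C p j * d ^ (p - j) * (1 - q) ^ j).
  - apply Rmult_le_compat_r; [lra |]. apply Rmult_le_compat_l; lra.
  - apply Rmult_le_compat_l; lra.
Qed.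

Lemma bernstein_compl (p j : nat) (q : R) : (j <= p)%nat ->
  bernstein p j (1 - q) = bernstein p (p - j) q.
Proof.
  intros Hjp. unfold bernstein.
  rewrite <- pascal_step1 by exact Hjp.
  replace (p - (p - j))%nat with j by lia.
  replace (1 - (1 - q)) with q by ring. ring.
Qed.

Lemma bernstein_le_near1 (p j : nat) (q d : R) : (j <= p)%nat ->
  1 - d <= q <= 1 -> INR (S p) * d <= 1 ->
  bernstein p j q <= exp 1 * bernstein p j (1 - d).
Proof.
  intros Hjp Hq Hpd.
  replace q with (1 - (1 - q)) by ring.
  rewrite (bernstein_compl p j (1 - q) Hjp), (bernstein_compl p j d Hjp).
  apply bernstein_le_near0; [lia | lra | exact Hpd].
Qed.

Lemma bernstein_pad_le_of_bernstein_le (p k : nat) (q r c : R) :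
  (forall j, (j <= p)%nat -> bernstein p j q <= c * bernstein p j r) ->
  bernstein_pad p k q <= c * bernstein_pad p k r.
Proof.
  intros Hb. destruct k as [| j]; simpl; [lra |].
  destruct (Nat.leb_spec j p); [apply Hb; lia | lra].
Qed.

Section RankAllocDeriv.

Variables (n : nat) (w : nat -> R).
Hypothesis hw : valid_weights n w.

Lemma rank_alloc_deriv_ge0 (q : R) : 0 <= q <= 1 -> 0 <= rank_alloc_deriv n w q.
Proof.
  intros Hq. apply sumR_ge0. intros j Hj.
  apply Rmult_le_pos; [apply weight_gap_ge0; assumption |].
  apply Rmult_le_pos; [apply pos_INR | apply bernstein_pad_ge0; exact Hq].
Qed.

Lemma rank_alloc_deriv_le_of_bernstein_le (q r c : R) :
  (forall j, (j <= n - 2)%nat -> bernstein (n - 2) j q <= c * bernstein (n - 2) j r) ->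
  rank_alloc_deriv n w q <= c * rank_alloc_deriv n w r.
Proof.
  intros Hb. unfold rank_alloc_deriv. rewrite <- sumR_mull. apply sumR_le.
  intros j Hj.
  pose proof (weight_gap_ge0 n w j hw Hj). pose proof (pos_INR (n - 1)).
  pose proof (bernstein_pad_le_of_bernstein_le (n - 2) (S j) q r c Hb).
  replace (c * (weight_gap n w j * (INR (n - 1) * bernstein_pad (n - 2) (S j) r)))
    with (weight_gap n w j * (INR (n - 1) * (c * bernstein_pad (n - 2) (S j) r))) by ring.
  apply Rmult_le_compat_l; [assumption |]. apply Rmult_le_compat_l; assumption.
Qed.

Hypothesis hn : (1 <= n)%nat.

Lemma INR_succ_sub2_mul_le (d : R) : 0 <= d -> INR n * d <= 1 -> INR (S (n - 2)) * d <= 1.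
Proof.
  intros Hd Hnd. assert (INR (S (n - 2)) <= INR n) by (apply le_INR; lia). nra.
Qed.

Lemma rank_alloc_deriv_le_near0 (q d : R) :
  0 <= q <= d -> INR n * d <= 1 -> rank_alloc_deriv n w q <= exp 1 * rank_alloc_deriv n w d.
Proof.
  intros Hq Hnd. apply rank_alloc_deriv_le_of_bernstein_le. intros j Hj.
  apply bernstein_le_near0; [exact Hj | exact Hq | apply INR_succ_sub2_mul_le; lra].
Qed.

Lemma rank_alloc_deriv_le_near1 (q d : R) : 0 <= d ->
  1 - d <= q <= 1 -> INR n * d <= 1 ->
  rank_alloc_deriv n w q <= exp 1 * rank_alloc_deriv n w (1 - d).
Proof.
  intros Hd Hq Hnd. apply rank_alloc_deriv_le_of_bernstein_le. intros j Hj.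
  apply bernstein_le_near1; [exact Hj | exact Hq | apply INR_succ_sub2_mul_le; lra].
Qed.

End RankAllocDeriv.

(* Where x'(q) = 0 the integrand vanishes, whatever value the division by 0 takes. *)
Lemma integrand_le (v xp yp : R -> R) (q : R) :
  q <= 1 -> 0 <= v q <= 1 -> 0 <= yp q -> integrand v xp yp q <= (1 - q) * yp q.
Proof.
  intros Hq Hv Hy. unfold integrand, Zy, bid_deriv.
  assert (Hbound : 0 <= (1 - q) * yp q) by (apply Rmult_le_pos; lra).
  destruct (Req_dec (xp q) 0) as [Hx | Hx].
  - rewrite Hx, !Rmult_0_r. exact Hbound.
  - replace ((1 - q) * yp q / xp q * (v q * xp q)) with ((1 - q) * yp q * v q)
      by (field; exact Hx).
    nra.
Qed.

Lemma boundary_integrals_le (v xp yp : R -> R) (d : R) :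
  0 < d <= 1 ->
  (forall q, 0 <= q <= 1 -> 0 <= v q <= 1) ->
  (forall q, 0 <= q <= 1 -> 0 <= yp q) ->
  (forall q, 0 <= q <= d -> yp q <= exp 1 * yp d) ->
  (forall q, 1 - d <= q <= 1 -> yp q <= exp 1 * yp (1 - d)) ->
  forall (pr1 : Riemann_integrable (integrand v xp yp) 0 d)
         (pr2 : Riemann_integrable (integrand v xp yp) (Rmax d (1 - d)) 1),
  RiemannInt pr1 + RiemannInt pr2 <= exp 1 * d * yp d + exp 1 * d ^ 2 * yp (1 - d).
Proof.
  intros Hd Hv Hy0 Hnear0 Hnear1 pr1 pr2.
  pose proof (exp_pos 1).
  assert (Hs : 1 - d <= Rmax d (1 - d) <= 1) by (split; [apply Rmax_r | apply Rmax_lub; lra]).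
  assert (I1 : RiemannInt pr1 <= RiemannInt (RiemannInt_P14 0 d (exp 1 * yp d))).
  { apply RiemannInt_P19; [lra |]. intros x Hx. unfold fct_cte.
    pose proof (integrand_le v xp yp x ltac:(lra) (Hv x ltac:(lra)) (Hy0 x ltac:(lra))).
    pose proof (Hnear0 x ltac:(lra)). pose proof (Hy0 x ltac:(lra)). nra. }
  assert (I2 : RiemannInt pr2 <=
               RiemannInt (RiemannInt_P14 (Rmax d (1 - d)) 1 (d * (exp 1 * yp (1 - d))))).
  { apply RiemannInt_P19; [lra |]. intros x Hx. unfold fct_cte.
    pose proof (integrand_le v xp yp x ltac:(lra) (Hv x ltac:(lra)) (Hy0 x ltac:(lra))).
    pose proof (Hnear1 x ltac:(lra)). pose proof (Hy0 x ltac:(lra)).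
    assert ((1 - x) * yp x <= d * yp x) by nra. nra. }
  rewrite RiemannInt_P15 in I1, I2.
  pose proof (Hy0 (1 - d) ltac:(lra)).
  assert (0 <= d * (exp 1 * yp (1 - d))) by (apply Rmult_le_pos; [| apply Rmult_le_pos]; lra).
  assert (d * (exp 1 * yp (1 - d)) * (1 - Rmax d (1 - d)) <= d * (exp 1 * yp (1 - d)) * d)
    by (apply Rmult_le_compat_l; lra).
  simpl. nra.
Qed.

Theorem mainTheorem9
  (n N : nat) (F v : R -> R) (wx wy : nat -> R) (xp yp : R -> R)
  (hn : (1 <= n)%nat) (hN : (1 <= N)%nat)
  (hF : is_cont_cdf01 F) (hv : is_quantile_fn F v)
  (hwx : valid_weights n wx) (hwy : valid_weights n wy)
  (hxp : forall q, derivable_pt_lim (rank_alloc n wx) q (xp q))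
  (hyp : forall q, derivable_pt_lim (rank_alloc n wy) q (yp q))
  (hdelta : deltaN n N <= 1 / INR n)
  (pr1 : Riemann_integrable (integrand v xp yp) 0 (deltaN n N))
  (pr2 : Riemann_integrable (integrand v xp yp)
           (Rmax (deltaN n N) (1 - deltaN n N)) 1) :
  RiemannInt pr1 + RiemannInt pr2 <=
    exp 1 * deltaN n N * yp (deltaN n N)
    + exp 1 * (deltaN n N) ^ 2 * yp (1 - deltaN n N).
Proof.
  set (d := deltaN n N) in *.
  assert (Hn : 1 <= INR n) by (apply (le_INR 1); exact hn).
  assert (Hd0 : 0 < d).
  { unfold d, deltaN. apply Rdiv_lt_0_compat.
    - apply Rlt_le_trans with (INR n); [lra | apply Rmax_r].
    - apply (lt_INR 0); lia. }
  assert (Hnd : INR n * d <= 1).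
  { apply Rle_trans with (INR n * (1 / INR n)); [apply Rmult_le_compat_l; lra |].
    right. field. lra. }
  assert (Hyp : forall q, yp q = rank_alloc_deriv n wy q).
  { intros q. apply (uniqueness_limite (rank_alloc n wy) q); [apply hyp |].
    apply is_derive_Reals, is_derive_rank_alloc. }
  apply boundary_integrals_le; [nra | | | |].
  - intros q Hq. exact (proj1 (hv q Hq)).
  - intros q Hq. rewrite Hyp. exact (rank_alloc_deriv_ge0 n wy hwy q Hq).
  - intros q Hq. rewrite !Hyp. exact (rank_alloc_deriv_le_near0 n wy hwy hn q d Hq Hnd).
  - intros q Hq. rewrite !Hyp.
    exact (rank_alloc_deriv_le_near1 n wy hwy hn q d ltac:(lra) Hq Hnd).
Qed.
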